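(* Let $H=\{\lambda\in B_{1/\sqrt2}(0):\ \mathrm{Re}(\lambda)>0,\ \mathrm{Im}(\lambda)>0\}\setminus B_{2/3}(1/3)$. Every $\lambda_0\in\mathcal M_0\cap\mathrm{int}(H)$ is an interior point of $\mathcal M$.
   Context: $\mathbb D=\{z\in\mathbb C:|z|<1\}$; $B_r(z_0)$ is the open disc of radius $r$ centered at $z_0$. $\mathcal M=\{\lambda\in\mathbb D:\ \exists (a_k)_{k\ge1},\ a_k\in\{-1,0,1\},\ 1+\sum_{k\ge1}a_k\lambda^k=0\}$ (the set of $\lambda$ for which the attractor of $\{\lambda z-1,\lambda z+1\}$ is connected). $\mathcal M_0=\{\lambda\in\mathbb D:\ \exists n\ge1,\ a_1,\dots,a_n\in\{-1,0,1\},\ 1+\sum_{k=1}^n a_k\lambda^k=0\}$ is the set of zeros in $\mathbb D$ of polynomials of this form. *)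

From Stdlib Require Import Reals.
From Coquelicot Require Import Coquelicot.
Open Scope R_scope.

Definition inD (z : C) : Prop := Cmod z < 1.

Definition digit (x : R) : Prop := x = -1 \/ x = 0 \/ x = 1.

Fixpoint psum (a : nat -> R) (l : C) (n : nat) : C :=
  match n with
  | O => RtoC 0
  | S m => Cplus (psum a l m) (Cmult (RtoC (a (S m))) (Cpow l (S m)))
  end.

(* M : lambda in D with 1 + sum_{k>=1} a_k lambda^k = 0, a_k in {-1,0,1};
   the series sum_{k>=1} a_k lambda^k (indexed by n = k-1) converges to -1. *)
Definition inM (l : C) : Prop :=
  inD l /\ exists a : nat -> R, (forall k, (1 <= k)%nat -> digit (a k)) /\
    is_series (fun n : nat => Cmult (RtoC (a (S n))) (Cpow l (S n))) (RtoC (-1)).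

Definition inM0 (l : C) : Prop :=
  inD l /\ exists (n : nat) (a : nat -> R), (1 <= n)%nat /\
    (forall k, (1 <= k <= n)%nat -> digit (a k)) /\
    Cplus (RtoC 1) (psum a l n) = RtoC 0.

Definition inH (l : C) : Prop :=
  Cmod l < 1 / sqrt 2 /\ 0 < Re l /\ 0 < Im l /\
  ~ (Cmod (Cminus l (RtoC (1/3))) < 2/3).

Definition interior_pt (S : C -> Prop) (z0 : C) : Prop :=
  exists r : R, 0 < r /\ forall z : C, Cmod (Cminus z z0) < r -> S z.

From Stdlib Require Import Reals Lra Lia Psatz.
From Coquelicot Require Import Coquelicot.
Open Scope R_scope.

(* Write a remainder as [r = s l + t] with [s, t] real. Dividing by [l] keeps this
   form, and adding a digit [d] in {-1, 0, 1} to the constant part keeps [(s, t)] in the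
   parallelogram [|s| <= 1 / (2 |l|^2)], [|t| <= 1/2]: the constant part before rounding
   is at most [(1/2 + Re l) / |l|^2 <= 3/2] in absolute value, which is exactly the
   condition that [l] lies outside [B_{2/3}(1/3)]. Starting from a trapped remainder,
   this greedy choice yields digits with [1 + sum_{k<=n} a_k l^k = l^n r_n], [|r_n| <= 2],
   so the series sums to [-1] since [|l| < 1]. If [P(l0) = 0], then for [z] near [l0] the
   value [P(z) / z^n0] is small, hence a trapped remainder, and the digits of [P] extend
   to an expansion of [-1] at [z]. *)

Lemma im_le_Cmod (c : C) : Rabs (Im c) <= Cmod c.
Proof.
  pose proof (Cmod2_alt c). pose proof (Cmod_ge_0 c).
  apply Rabs_le. split; nra.
Qed.

Lemma Im_dist_le_Cmod (z l : C) : Rabs (Im z - Im l) <= Cmod (Cminus z l).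
Proof.
  replace (Im z - Im l) with (Im (Cminus z l)) by (destruct z, l; simpl; ring).
  apply im_le_Cmod.
Qed.

Lemma is_series_geometric_rate (u : nat -> C) (L : C) (B q : R) (n1 : nat) :
  0 <= q < 1 -> (forall n, (n1 <= n)%nat -> Cmod (Cminus (sum_n u n) L) <= B * q ^ n) ->
  is_series u L.
Proof.
  intros Hq Hb. apply filterlim_locally_ball_norm. intros [eps Heps].
  assert (Hq' : Rabs q < 1) by (rewrite Rabs_pos_eq; lra).
  assert (Heps' : 0 < eps / (Rabs B + 1)) by (apply Rdiv_lt_0_compat; pose proof (Rabs_pos B); lra).
  destruct (pow_lt_1_zero q Hq' _ Heps') as [N HN].
  exists (N + n1)%nat. intros n Hn. unfold ball_norm; simpl.
  change (Cmod (Cminus (sum_n u n) L) < eps).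
  specialize (HN n ltac:(lia)). rewrite Rabs_pos_eq in HN by (apply pow_le; lra).
  eapply Rle_lt_trans; [apply Hb; lia|].
  pose proof (Rle_abs B). pose proof (Rabs_pos B). pose proof (pow_le q n (proj1 Hq)).
  apply Rle_lt_trans with (Rabs B * q ^ n); [nra|].
  apply Rle_lt_trans with (Rabs B * (eps / (Rabs B + 1))); [nra|].
  replace eps with ((Rabs B + 1) * (eps / (Rabs B + 1))) at 2 by (field; lra).
  nra.
Qed.

Definition cancelling_digit (w : R) : R :=
  if Rlt_dec (1/2) w then -1 else if Rlt_dec w (-1/2) then 1 else 0.

Lemma cancelling_digit_digit w : digit (cancelling_digit w).
Proof.
  unfold cancelling_digit, digit.
  destruct Rlt_dec; [lra|]. destruct Rlt_dec; lra.
Qed.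

Lemma cancelling_digit_bound w : Rabs w <= 3/2 -> Rabs (w + cancelling_digit w) <= 1/2.
Proof.
  intros Hw. apply Rabs_le_between in Hw. apply Rabs_le.
  unfold cancelling_digit. destruct Rlt_dec; [lra|]. destruct Rlt_dec; lra.
Qed.

Lemma Cmod_digit x : digit x -> Cmod x <= 1.
Proof. intros Hx. rewrite Cmod_R. apply Rabs_le. unfold digit in Hx. lra. Qed.

Lemma psum_ext a b l n :
  (forall k, (1 <= k <= n)%nat -> a k = b k) -> psum a l n = psum b l n.
Proof.
  induction n as [|n IH]; intros Hab; simpl; auto.
  rewrite IH by (intros; apply Hab; lia). rewrite Hab by lia. reflexivity.
Qed.

Lemma sum_n_psum (a : nat -> R) l n :
  sum_n (fun k => Cmult (RtoC (a (S k))) (Cpow l (S k))) n = psum a l (S n).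
Proof.
  induction n as [|n IH].
  - rewrite sum_O. simpl. ring.
  - rewrite sum_Sn, IH. reflexivity.
Qed.

Lemma Cpow_lipschitz (l m : C) k : Cmod l <= 1 -> Cmod m <= 1 ->
  Cmod (Cminus (Cpow l k) (Cpow m k)) <= INR k * Cmod (Cminus l m).
Proof.
  intros Hl Hm. induction k as [|k IH].
  - simpl. replace (Cminus 1 1) with (RtoC 0) by ring. rewrite Cmod_0. lra.
  - replace (Cminus (Cpow l (S k)) (Cpow m (S k))) with
      (Cplus (Cmult l (Cminus (Cpow l k) (Cpow m k))) (Cmult (Cpow m k) (Cminus l m)))
      by (simpl; ring).
    eapply Rle_trans; [apply Cmod_triangle|].
    rewrite !Cmod_mult, Cmod_pow, S_INR.
    assert (Cmod m ^ k <= 1) by (rewrite <- (pow1 k); apply pow_incr; pose proof (Cmod_ge_0 m); lra).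
    pose proof (pow_le _ k (Cmod_ge_0 m)).
    pose proof (Cmod_ge_0 (Cminus (Cpow l k) (Cpow m k))).
    pose proof (Cmod_ge_0 (Cminus l m)). pose proof (Cmod_ge_0 l).
    nra.
Qed.

Lemma psum_lipschitz a (l m : C) n : Cmod l <= 1 -> Cmod m <= 1 ->
  (forall k, (1 <= k <= n)%nat -> digit (a k)) ->
  Cmod (Cminus (psum a l n) (psum a m n)) <= INR n * INR n * Cmod (Cminus l m).
Proof.
  intros Hl Hm. induction n as [|n IH]; intros Hd.
  - simpl. replace (Cminus 0 0) with (RtoC 0) by ring. rewrite Cmod_0. lra.
  - cbn [psum].
    replace (Cminus (Cplus (psum a l n) (Cmult (a (S n)) (Cpow l (S n))))
                    (Cplus (psum a m n) (Cmult (a (S n)) (Cpow m (S n)))))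
      with (Cplus (Cminus (psum a l n) (psum a m n))
                  (Cmult (a (S n)) (Cminus (Cpow l (S n)) (Cpow m (S n)))))
      by ring.
    eapply Rle_trans; [apply Cmod_triangle|]. rewrite Cmod_mult.
    pose proof (IH (fun k Hk => Hd k ltac:(lia))).
    pose proof (Cmod_digit _ (Hd (S n) ltac:(lia))).
    pose proof (Cpow_lipschitz l m (S n) Hl Hm).
    pose proof (Cmod_ge_0 (Cminus (Cpow l (S n)) (Cpow m (S n)))).
    pose proof (Cmod_ge_0 (Cminus l m)). pose proof (pos_INR n).
    rewrite S_INR in *. nra.
Qed.

Lemma psum_near_root a (z l0 : C) n : Cmod z <= 1 -> Cmod l0 <= 1 ->
  (forall k, (1 <= k <= n)%nat -> digit (a k)) ->
  Cplus 1 (psum a l0 n) = RtoC 0 ->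
  Cmod (Cplus 1 (psum a z n)) <= INR n * INR n * Cmod (Cminus z l0).
Proof.
  intros Hz Hl0 Hd Hroot.
  replace (Cplus 1 (psum a z n)) with (Cminus (psum a z n) (psum a l0 n)).
  - apply psum_lipschitz; assumption.
  - replace (psum a l0 n) with (Cminus (Cplus 1 (psum a l0 n)) 1) by ring.
    rewrite Hroot. ring.
Qed.

Section GreedyExpansion.
Variable l : C.

Definition remainder (st : R * R) : C := Cplus (Cmult (RtoC (fst st)) l) (RtoC (snd st)).

(* Since [Cconj l = 2 Re l - l], we have [(s l + t) / l = (- t / |l|^2) l + (s + 2 Re l t / |l|^2)]. *)
Definition div_state (st : R * R) : R * R :=
  (- snd st / Cmod l ^ 2, fst st + 2 * Re l * snd st / Cmod l ^ 2).

Definition next_digit (st : R * R) : R := cancelling_digit (snd (div_state st)).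

Definition step (st : R * R) : R * R :=
  (fst (div_state st), snd (div_state st) + next_digit st).

Definition orbit (st0 : R * R) (j : nat) : R * R := Nat.iter j step st0.

Definition trapped (st : R * R) : Prop :=
  Rabs (fst st) <= / (2 * Cmod l ^ 2) /\ Rabs (snd st) <= 1/2.

Lemma remainder_step st : l <> RtoC 0 ->
  Cmult l (remainder (step st)) = Cplus (remainder st) (Cmult (RtoC (next_digit st)) l).
Proof.
  intros Hl. apply Cmod_gt_0 in Hl.
  assert (HN : Re l ^ 2 + Im l ^ 2 <> 0) by (rewrite <- Cmod2_alt; apply pow_nonzero; lra).
  revert HN. unfold remainder, step, div_state. rewrite Cmod2_alt.
  destruct l as [x y]; destruct st as [s t]; cbn [fst snd Re Im]; intros HN.
  unfold Cmult, Cplus, RtoC; apply injective_projections; simpl; field; nra.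
Qed.

Lemma trapped_step st : 0 <= Re l -> l <> RtoC 0 -> 1 + 2 * Re l <= 3 * Cmod l ^ 2 ->
  trapped st -> trapped (step st).
Proof.
  intros Hx Hl Hout. apply Cmod_gt_0 in Hl.
  destruct st as [s t]. unfold trapped, step, next_digit, div_state; cbn [fst snd].
  set (N := Cmod l ^ 2) in *. set (x := Re l) in *. intros [Hs Ht].
  assert (HN : 0 < N) by (apply pow_lt; exact Hl).
  assert (HsN : Rabs (s * N) <= 1/2).
  { rewrite Rabs_mult, (Rabs_pos_eq N) by lra.
    replace (1/2) with (/ (2 * N) * N) by (field; lra). nra. }
  apply Rabs_le_between in HsN. apply Rabs_le_between in Ht.
  split.
  - replace (/ (2 * N)) with ((1/2) / N) by (field; lra).
    unfold Rdiv. rewrite Rabs_mult, Rabs_Ropp, Rabs_inv, (Rabs_pos_eq N) by lra.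
    apply Rmult_le_compat_r; [left; apply Rinv_0_lt_compat; lra|].
    apply Rabs_le. lra.
  - apply cancelling_digit_bound.
    replace (s + 2 * x * t / N) with ((s * N + 2 * x * t) / N) by (field; lra).
    unfold Rdiv. rewrite Rabs_mult, Rabs_inv, (Rabs_pos_eq N) by lra.
    apply Rmult_le_reg_r with N; [lra|]. rewrite Rmult_assoc, Rinv_l by lra.
    rewrite Rmult_1_r. apply Rabs_le. nra.
Qed.

Lemma Cmod_remainder_le st : 1 <= 3 * Cmod l ^ 2 -> Cmod l <= 1 ->
  trapped st -> Cmod (remainder st) <= 2.
Proof.
  intros HN Hl [Hs Ht]. unfold remainder.
  eapply Rle_trans; [apply Cmod_triangle|]. rewrite Cmod_mult, !Cmod_R.
  assert (/ (2 * Cmod l ^ 2) <= 3/2).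
  { rewrite <- (Rinv_inv (3/2)). apply Rinv_le_contravar; lra. }
  pose proof (Rabs_pos (fst st)). pose proof (Cmod_ge_0 l). nra.
Qed.

Definition greedy_digits (n0 : nat) (a0 : nat -> R) (st0 : R * R) (k : nat) : R :=
  if (k <=? n0)%nat then a0 k else next_digit (orbit st0 (k - S n0)).

Lemma greedy_digits_remainder n0 a0 st0 : l <> RtoC 0 ->
  Cplus 1 (psum a0 l n0) = Cmult (Cpow l n0) (remainder st0) ->
  forall j, Cplus 1 (psum (greedy_digits n0 a0 st0) l (n0 + j)) =
            Cmult (Cpow l (n0 + j)) (remainder (orbit st0 j)).
Proof.
  intros Hl H0 j. induction j as [|j IH].
  - rewrite Nat.add_0_r. change (orbit st0 0) with st0. rewrite <- H0.
    f_equal. apply psum_ext. intros k Hk. unfold greedy_digits.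
    replace (k <=? n0)%nat with true by (symmetry; apply Nat.leb_le; lia). reflexivity.
  - rewrite Nat.add_succ_r. cbn [psum].
    unfold greedy_digits at 2.
    replace (S (n0 + j) <=? n0)%nat with false by (symmetry; apply Nat.leb_gt; lia).
    replace (S (n0 + j) - S n0)%nat with j by lia.
    change (orbit st0 (S j)) with (step (orbit st0 j)).
    rewrite Cplus_assoc, IH, Cpow_S.
    transitivity (Cmult (Cpow l (n0 + j)) (Cmult l (remainder (step (orbit st0 j))))).
    + rewrite remainder_step by exact Hl. ring.
    + ring.
Qed.

End GreedyExpansion.

Lemma inH_bounds l : inH l ->
  0 < Re l /\ 0 < Im l /\ Cmod l ^ 2 < 1/2 /\ 1 + 2 * Re l <= 3 * Cmod l ^ 2.
Proof.
  intros [Hmod [Hx [Hy Hout]]]. apply Rnot_lt_le in Hout.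
  repeat split; try assumption.
  - assert (E : (1 / sqrt 2) ^ 2 = 1/2).
    { rewrite <- (pow2_sqrt 2) at 2 by lra. field. apply sqrt2_neq_0. }
    rewrite <- E.
    pose proof (Cmod_ge_0 l). simpl. nra.
  - pose proof (Cmod2_alt (Cminus l (RtoC (1/3)))) as Hd.
    assert (Hd' : (2/3) ^ 2 <= Cmod (Cminus l (RtoC (1/3))) ^ 2) by (apply pow_incr; lra).
    rewrite Cmod2_alt. destruct l as [x y]. simpl in *. nra.
Qed.

Lemma inH_Cmod_lt_1 l : inH l -> Cmod l < 1.
Proof.
  intros HH. destruct (inH_bounds l HH) as [_ [_ [Hsmall _]]].
  pose proof (Cmod_ge_0 l). simpl in Hsmall. nra.
Qed.

Lemma inM_of_trapped_remainder l n0 a0 st0 : inH l ->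
  (forall k, (1 <= k <= n0)%nat -> digit (a0 k)) ->
  Cplus 1 (psum a0 l n0) = Cmult (Cpow l n0) (remainder l st0) ->
  trapped l st0 -> inM l.
Proof.
  intros HH Hd H0 Htr.
  destruct (inH_bounds l HH) as [Hx [Hy [_ Hout]]].
  assert (Hl0 : l <> RtoC 0) by (intros E; rewrite E in Hy; simpl in Hy; lra).
  pose proof (inH_Cmod_lt_1 l HH) as Hl1.
  assert (Htraps : forall j, trapped l (orbit l st0 j)).
  { induction j as [|j IH]; [exact Htr|]. apply trapped_step; auto; lra. }
  split; [exact Hl1|].
  exists (greedy_digits l n0 a0 st0). split.
  - intros k Hk. unfold greedy_digits. destruct (k <=? n0)%nat eqn:E.
    + apply Hd. apply Nat.leb_le in E. lia.
    + apply cancelling_digit_digit.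
  - apply is_series_geometric_rate with 2 (Cmod l) n0.
    + split; [apply Cmod_ge_0 | exact Hl1].
    + intros n Hn. rewrite sum_n_psum.
      replace (Cminus (psum (greedy_digits l n0 a0 st0) l (S n)) (RtoC (-1)))
        with (Cplus 1 (psum (greedy_digits l n0 a0 st0) l (S n)))
        by (apply injective_projections; simpl; ring).
      replace (S n) with (n0 + (S n - n0))%nat at 1 by lia.
      rewrite greedy_digits_remainder, Cmod_mult, Cmod_pow by assumption.
      replace (n0 + (S n - n0))%nat with (S n) by lia.
      pose proof (Cmod_remainder_le l _ ltac:(lra) ltac:(lra) (Htraps (S n - n0)%nat)).
      pose proof (Cmod_ge_0 (remainder l (orbit l st0 (S n - n0)))).
      assert (Cmod l ^ S n <= Cmod l ^ n).
      { simpl. pose proof (pow_le _ n (Cmod_ge_0 l)). nra. }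
      pose proof (pow_le _ (S n) (Cmod_ge_0 l)). nra.
Qed.

Definition coordinates (l w : C) : R * R := (Im w / Im l, Re w - Im w / Im l * Re l).

Lemma remainder_coordinates l w : Im l <> 0 -> remainder l (coordinates l w) = w.
Proof.
  destruct w as [u v]; destruct l as [x y]; simpl; intros Hy.
  unfold remainder, Cmult, Cplus, RtoC; simpl.
  apply injective_projections; simpl; field; exact Hy.
Qed.

Lemma trapped_coordinates l w : inH l -> Cmod w * (1 + / Im l) <= 1/2 ->
  trapped l (coordinates l w).
Proof.
  intros HH Hw. destruct (inH_bounds l HH) as [Hx [Hy [Hsmall _]]].
  assert (Hx1 : Re l <= 1).
  { pose proof (Rle_abs (Re l)). pose proof (re_le_Cmod l). pose proof (inH_Cmod_lt_1 l HH). lra. }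
  assert (Hs : Rabs (Im w / Im l) <= Cmod w * / Im l).
  { unfold Rdiv. rewrite Rabs_mult, Rabs_inv, (Rabs_pos_eq (Im l)) by lra.
    apply Rmult_le_compat_r; [left; apply Rinv_0_lt_compat; lra | apply im_le_Cmod]. }
  pose proof (re_le_Cmod w). pose proof (Cmod_ge_0 w).
  assert (0 < / Im l) by (apply Rinv_0_lt_compat; lra).
  unfold trapped, coordinates; cbn [fst snd]. split.
  - assert (1 <= / (2 * Cmod l ^ 2)).
    { rewrite <- Rinv_1. apply Rinv_le_contravar; [| lra].
      apply Rmult_lt_0_compat; [lra|]. apply pow_lt, Cmod_gt_0.
      intros E. rewrite E in Hy. simpl in Hy. lra. }
    nra.
  - eapply Rle_trans; [apply Rabs_triang|]. rewrite Rabs_Ropp, Rabs_mult, (Rabs_pos_eq (Re l)) by lra.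
    pose proof (Rabs_pos (Im w / Im l)). nra.
Qed.

Lemma inM_of_small_value z n0 a0 : inH z ->
  (forall k, (1 <= k <= n0)%nat -> digit (a0 k)) ->
  2 * Cmod (Cplus 1 (psum a0 z n0)) * (1 + / Im z) <= Cmod z ^ n0 -> inM z.
Proof.
  intros HH Hd Hsmall.
  destruct (inH_bounds z HH) as [_ [Hy _]].
  assert (Hzn : Cpow z n0 <> RtoC 0).
  { apply Cpow_nz. intros E. rewrite E in Hy. simpl in Hy. lra. }
  set (w := Cdiv (Cplus 1 (psum a0 z n0)) (Cpow z n0)).
  apply inM_of_trapped_remainder with n0 a0 (coordinates z w); [exact HH | exact Hd | |].
  - rewrite remainder_coordinates by lra. unfold w. field. exact Hzn.
  - apply trapped_coordinates; [exact HH|].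
    assert (Hpos : 0 < Cmod z ^ n0) by (rewrite <- Cmod_pow; apply Cmod_gt_0; exact Hzn).
    unfold w. rewrite Cmod_div, Cmod_pow by exact Hzn.
    apply Rmult_le_reg_l with (2 * Cmod z ^ n0); [lra|].
    replace (2 * Cmod z ^ n0 * (Cmod (Cplus 1 (psum a0 z n0)) / Cmod z ^ n0 * (1 + / Im z)))
      with (2 * Cmod (Cplus 1 (psum a0 z n0)) * (1 + / Im z)) by (field; lra).
    lra.
Qed.

Lemma small_value_near_root a0 n0 (l0 : C) : 0 < Im l0 -> Cmod l0 <= 1 ->
  (forall k, (1 <= k <= n0)%nat -> digit (a0 k)) ->
  Cplus 1 (psum a0 l0 n0) = RtoC 0 ->
  exists r, 0 < r /\ forall z, Cmod (Cminus z l0) < r -> Cmod z <= 1 ->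
    2 * Cmod (Cplus 1 (psum a0 z n0)) * (1 + / Im z) <= Cmod z ^ n0.
Proof.
  intros Hy0 Hl0 Hd Hroot.
  set (m := Im l0 / 2).
  set (n2 := INR n0 * INR n0).
  set (delta := m ^ n0 / (2 * (n2 + 1) * (1 + / m))).
  assert (Hm : 0 < m) by (unfold m; lra).
  assert (Hminv : 0 < / m) by (apply Rinv_0_lt_compat, Hm).
  assert (Hn2 : 0 <= n2) by (unfold n2; pose proof (pos_INR n0); nra).
  assert (Hbudget : 2 * (n2 + 1) * delta * (1 + / m) = m ^ n0).
  { unfold delta. field. nra. }
  exists (Rmin m delta). split.
  { apply Rmin_glb_lt; [lra|]. unfold delta. apply Rdiv_lt_0_compat; [apply pow_lt|]; nra. }
  intros z Hz Hz1.
  pose proof (Rmin_l m delta). pose proof (Rmin_r m delta).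
  assert (Hym : m < Im z).
  { pose proof (Im_dist_le_Cmod z l0) as Hi. apply Rabs_le_between in Hi. unfold m in *. lra. }
  assert (HP : Cmod (Cplus 1 (psum a0 z n0)) <= n2 * Cmod (Cminus z l0))
    by (apply psum_near_root; assumption).
  assert (Hinv : / Im z <= / m) by (apply Rinv_le_contravar; lra).
  assert (Hpow : m ^ n0 <= Cmod z ^ n0).
  { apply pow_incr. pose proof (im_le_Cmod z). pose proof (Rle_abs (Im z)). lra. }
  pose proof (Cmod_ge_0 (Cplus 1 (psum a0 z n0))). pose proof (Cmod_ge_0 (Cminus z l0)).
  pose proof (Rinv_0_lt_compat (Im z) ltac:(lra)).
  assert (Cmod (Cplus 1 (psum a0 z n0)) <= (n2 + 1) * delta) by nra.
  nra.
Qed.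

Theorem mainTheorem2 (l0 : C) :
  inM0 l0 -> interior_pt inH l0 -> interior_pt inM l0.
Proof.
  intros [_ [n0 [a0 [_ [Hd Hroot]]]]] [rH [HrH Hball]].
  assert (HH0 : inH l0).
  { apply Hball. replace (Cminus l0 l0) with (RtoC 0) by ring. rewrite Cmod_0. lra. }
  destruct (small_value_near_root a0 n0 l0) as [r [Hr Hsmall]]; try assumption.
  - apply (inH_bounds l0 HH0).
  - apply Rlt_le, inH_Cmod_lt_1, HH0.
  - exists (Rmin rH r). split; [apply Rmin_glb_lt; assumption|].
    intros z Hz.
    assert (HH : inH z) by (apply Hball; eapply Rlt_le_trans; [exact Hz | apply Rmin_l]).
    apply inM_of_small_value with n0 a0; [exact HH | exact Hd |].
    apply Hsmall; [eapply Rlt_le_trans; [exact Hz | apply Rmin_r] |].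
    apply Rlt_le, inH_Cmod_lt_1, HH.
Qed.
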